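(* Fix $\mathsf{SNR}>0$ and integers $L\ge1$, $M\ge1$. Let $\{h_{i,j}\}_{i\ge1,\,1\le j\le L}$ be i.i.d. $\mathcal{CN}(0,1)$ and set $C_i=\frac1L\sum_{j=1}^L\log_2(1+\mathsf{SNR}|h_{i,j}|^2)$. For an initial rate $R_{\mathrm{init}}>0$ define $\mathcal{T}(R_{\mathrm{init}})=\min\bigl(M,\ \min\{t\ge1:\sum_{i=1}^tC_i>R_{\mathrm{init}}\}\bigr)$, the post-HARQ outage probability $\varepsilon(R_{\mathrm{init}})=\mathbb{P}\bigl[\sum_{i=1}^M C_i\le R_{\mathrm{init}}\bigr]$, and the HARQ goodput $$\eta_{\mathrm{HARQ}}(R_{\mathrm{init}})=\frac{R_{\mathrm{init}}\,(1-\varepsilon(R_{\mathrm{init}}))}{\mathbb{E}[\mathcal{T}(R_{\mathrm{init}})]}.$$ For a non-HARQ system with diversity order $ML$, define for $R>0$ the goodput $g_{ML}(R)=R\,(1-\varepsilon_{ML}(R))$ with $\varepsilon_{ML}(R)=\mathbb{P}\bigl[\frac{1}{ML}\sum_{k=1}^{ML}\log_2(1+\mathsf{SNR}|g_k|^2)\le R\bigr]$, $g_k$ i.i.d. $\mathcal{CN}(0,1)$, and let $R^\star_{ML}$ be the largest maximizer of $g_{ML}$ over $R>0$ (assumed to exist). Then every maximizer $R^\star_{\mathrm{init}}$ of $\eta_{\mathrm{HARQ}}$ over $R_{\mathrm{init}}>0$ satisfies $$\frac{R^\star_{\mathrm{init}}}{M}\le R^\star_{ML},$$ i.e., the optimal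 HARQ initial rate, divided by $M$, is at most the optimal transmitted rate of the non-HARQ system with diversity order $ML$.
   Context: Model: Rayleigh block fading; each HARQ round spans $L$ independently faded blocks with gains $h_{i,j}$, independent across rounds; incremental-redundancy HARQ accumulates mutual information across rounds, so a packet is decoded in the first round $t$ at which the accumulated mutual information $\sum_{i\le t}C_i$ exceeds $R_{\mathrm{init}}$; at most $M$ rounds are allowed, after which (if still undecoded) a post-HARQ outage occurs and the HARQ process restarts. $\mathcal{CN}(0,1)$ denotes a circularly symmetric complex Gaussian with unit variance. *)

From HB Require Import structures.
From mathcomp Require Import all_boot all_order all_algebra.
From mathcomp Require Import all_classical all_reals all_analysis.
Set Implicit Arguments. Unset Strict Implicit. Unset Printing Implicit Defensive.
Import Order.TTheory GRing.Theory Num.Theory.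
Import numFieldNormedType.Exports.
Local Open Scope classical_set_scope.
Local Open Scope ring_scope.

Definition log2 {R : realType} (x : R) : R := ln x / ln 2.

Definition mutually_independent {d} {T : measurableType d} {R : realType}
  (P : probability T R) (I : eqType) (X : I -> {mfun T >-> R}) : Prop :=
  forall (s : seq I) (B : I -> set R), uniq s -> (forall i, measurable (B i)) ->
    P (\bigcap_(i in [set i | i \in s]) (X i @^-1` B i)) =
    (\prod_(i <- s) P (X i @^-1` B i))%E.

(* (hr i) + sqrt(-1) (hi i), i : I, is an i.i.d. family of CN(0,1) variables:
   all real and imaginary parts are mutually independent, each N(0, 1/2)
   (standard deviation sqrt(1/2)). *)
Definition iid_CN01 {d} {T : measurableType d} {R : realType}
  (P : probability T R) (I : eqType) (hr hi : I -> {mfun T >-> R}) : Prop :=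
  mutually_independent P (fun p : I * bool => if p.2 then hr p.1 else hi p.1) /\
  (forall i B, measurable B ->
     distribution P (hr i) B = normal_prob 0 (Num.sqrt (1 / 2)) B /\
     distribution P (hi i) B = normal_prob 0 (Num.sqrt (1 / 2)) B).

Definition sqnorm {d} {T : measurableType d} {R : realType}
  (hr hi : {mfun T >-> R}) (w : T) : R := hr w ^+ 2 + hi w ^+ 2.

(* Mutual information of round i (rounds indexed from 0, i.e. round i+1 of the
   paper): C_i = 1/L sum_{j<L} log2(1 + SNR |h_{i,j}|^2). *)
Definition Cround {d} {T : measurableType d} {R : realType} (SNR : R) (L : nat)
  (hr hi : nat -> 'I_L -> {mfun T >-> R}) (i : nat) (w : T) : R :=
  (L%:R)^-1 * \sum_(j < L) log2 (1 + SNR * sqnorm (hr i j) (hi i j) w).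

(* T(Rinit) = min(M, min{t >= 1 : sum_{i<=t} C_i > Rinit}) (min of empty set = +oo) *)
Definition Tharq {d} {T : measurableType d} {R : realType} (SNR : R) (L M : nat)
  (hr hi : nat -> 'I_L -> {mfun T >-> R}) (Rinit : R) (w : T) : nat :=
  \big[minn/M]_(1 <= t < M.+1 | Rinit < \sum_(i < t) Cround SNR hr hi i w) t.

Definition eps_harq {d} {T : measurableType d} {R : realType}
  (P : probability T R) (SNR : R) (L M : nat)
  (hr hi : nat -> 'I_L -> {mfun T >-> R}) (Rinit : R) : R :=
  fine (P [set w | \sum_(i < M) Cround SNR hr hi i w <= Rinit]).

Definition eta_harq {d} {T : measurableType d} {R : realType}
  (P : probability T R) (SNR : R) (L M : nat)
  (hr hi : nat -> 'I_L -> {mfun T >-> R}) (Rinit : R) : R :=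
  Rinit * (1 - eps_harq P SNR M hr hi Rinit)
  / fine ('E_P[fun w => (Tharq SNR M hr hi Rinit w)%:R]).

Definition eps_div {d} {T : measurableType d} {R : realType}
  (P : probability T R) (SNR : R) (N : nat)
  (gr gi : 'I_N -> {mfun T >-> R}) (Rt : R) : R :=
  fine (P [set w | (N%:R)^-1 *
          \sum_(k < N) log2 (1 + SNR * sqnorm (gr k) (gi k) w) <= Rt]).

Definition goodput_div {d} {T : measurableType d} {R : realType}
  (P : probability T R) (SNR : R) (N : nat)
  (gr gi : 'I_N -> {mfun T >-> R}) (Rt : R) : R :=
  Rt * (1 - eps_div P SNR gr gi Rt).

(* Relabelling the M*L fading gains of the HARQ rounds as the M*L gains of
   the non-HARQ system does not change their joint law (both families are
   independent with the same marginals), and the accumulated mutual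
   information over M rounds is exactly M times the non-HARQ rate.  Hence
   eps(M R) = eps_ML(R), so that eta(M R) = M g_ML(R) / E[T(M R)].  If a
   maximizer R* had R*/M > R*_ML, then g_ML(R*/M) < g_ML(R*_ML) because R*_ML
   is the largest maximizer, while E[T] is nondecreasing and at least 1, so
   M R*_ML would give a strictly larger goodput than R*. *)

From HB Require Import structures.
From mathcomp Require Import all_boot all_order all_algebra.
From mathcomp Require Import all_classical all_reals all_analysis.
From mathcomp Require Import measurable_realfun.
Set Implicit Arguments. Unset Strict Implicit. Unset Printing Implicit Defensive.
Import Order.TTheory GRing.Theory Num.Theory.
Local Open Scope classical_set_scope.
Local Open Scope ring_scope.

Section joint_law.
Variables (R : realType) (K : finType).

Definition Rvec := K -> R.
HB.instance Definition _ := gen_eqMixin Rvec.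
HB.instance Definition _ := gen_choiceMixin Rvec.
HB.instance Definition _ := isPointed.Build Rvec (fun _ => 0).

Definition rect_sets : set (set Rvec) := [set A | exists B : K -> set R,
  (forall k, measurable (B k)) /\ A = [set f : Rvec | forall k, B k (f k)]].

Local Notation Rvec_meas := (g_sigma_algebraType rect_sets).

Lemma rect_sets_setI : setI_closed rect_sets.
Proof.
move=> _ _ [B [mB ->]] [B' [mB' ->]]; exists (fun k => B k `&` B' k); split.
  by move=> k; apply: measurableI.
apply/seteqP; split=> f /=; first by move=> [h1 h2] k; split.
by move=> h; split=> k; case: (h k).
Qed.

Lemma rect_sets_setT : rect_sets setT.
Proof. by exists (fun=> setT); split => //; apply/seteqP; split. Qed.

Lemma measurable_coord (k : K) : measurable_fun [set: Rvec_meas] (fun f => f k).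
Proof.
move=> _ B mB; rewrite setTI; apply: sub_sigma_algebra.
exists (fun j => if j == k then B else setT); split; first by move=> j; case: eqP.
apply/seteqP; split=> f /=; first by move=> fB j; case: eqP => // ->.
by move=> /(_ k); rewrite eqxx.
Qed.

Section joint.
Context d (T : measurableType d) (X : K -> {mfun T >-> R}).

Definition joint (w : T) : Rvec_meas := fun k => X k w.

Lemma preimage_joint_rect (B : K -> set R) :
  joint @^-1` [set f : Rvec | forall k, B k (f k)] =
  \bigcap_(k in [set k | k \in enum K]) (X k @^-1` B k).
Proof.
apply/seteqP; split=> w /=; first by move=> h k _; exact: h.
by move=> h k; apply: h; rewrite /= mem_enum.
Qed.

Lemma measurable_joint : measurable_fun [set: T] joint.
Proof.
apply: (@measurability _ _ _ Rvec_meas _ _ rect_sets) => //.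
move=> _ [A [B [mB ->]] <-]; rewrite setTI preimage_joint_rect.
apply: fin_bigcap_measurable; first exact: finite_finset.
move=> k _; rewrite -[X in measurable X]setTI; exact: (measurable_funP (X k)).
Qed.

HB.instance Definition _ := isMeasurableFun.Build _ _ _ _ joint measurable_joint.
End joint.

(* Both laws agree on the rectangles, a pi-system generating the sigma-algebra. *)
Lemma independent_joint_law_eq d (T : measurableType d)
  d' (T' : measurableType d') (P : probability T R) (P' : probability T' R)
  (X : K -> {mfun T >-> R}) (Y : K -> {mfun T' >-> R}) :
  mutually_independent P X -> mutually_independent P' Y ->
  (forall k B, measurable B -> P (X k @^-1` B) = P' (Y k @^-1` B)) ->
  forall A : set Rvec_meas, measurable A ->
    P (joint X @^-1` A) = P' (joint Y @^-1` A).
Proof.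
move=> iX iY marg A mA.
apply: (@measure_unique _ R Rvec_meas rect_sets (fun=> setT) erefl
  rect_sets_setI (fun=> rect_sets_setT) _
  (distribution P (joint X)) (distribution P' (joint Y)) _ _ A mA).
- by apply/seteqP; split => // x _; exists 0%N.
- move=> _ [B [mB ->]].
  rewrite -[LHS]/(P (joint X @^-1` _)) -[RHS]/(P' (joint Y @^-1` _)).
  rewrite !preimage_joint_rect.
  rewrite (iX (enum K) B (enum_uniq _) mB) (iY (enum K) B (enum_uniq _) mB).
  by apply: eq_bigr => k _; exact: marg.
- move=> _; rewrite -[X in (X < _)%E]/(P (joint X @^-1` _)).
  by rewrite preimage_setT probability_setT ltry.
Qed.

End joint_law.

Lemma mutually_independent_comp d (T : measurableType d) (R : realType)
  (P : probability T R) (I : eqType) (J : finType) (X : I -> {mfun T >-> R})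
  (f : J -> I) :
  mutually_independent P X -> injective f ->
  mutually_independent P (fun j => X (f j)).
Proof.
move=> iX finj s B us mB.
pose B' i := if [pick j | f j == i] is Some j then B j else setT.
have B'f j : B' (f j) = B j.
  by rewrite /B'; case: pickP => [j' /eqP/finj -> //|/(_ j)]; rewrite eqxx.
have mB' i : measurable (B' i) by rewrite /B'; case: pickP.
have -> : (\prod_(j <- s) P (X (f j) @^-1` B j) =
           \prod_(i <- map f s) P (X i @^-1` B' i))%E.
  by rewrite big_map; apply: eq_bigr => j _; rewrite B'f.
rewrite -(iX (map f s) B' _ mB'); last by rewrite map_inj_uniq.
congr (P _); apply/seteqP; split => w /=.
- by move=> h _ /= /mapP [j js ->]; rewrite B'f; exact: h.
- by move=> h j js; rewrite -B'f; apply: h; rewrite /= map_f.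
Qed.

Lemma measurable_log2 (R : realType) : measurable_fun [set: R] (@log2 R).
Proof. by apply: measurable_funM => //; exact: measurable_ln. Qed.

Lemma measurable_rate d (T : measurableType d) (R : realType) (SNR : R) (n : nat)
  (xr xi : 'I_n -> {mfun T >-> R}) :
  measurable_fun [set: T]
    (fun w => n%:R^-1 * \sum_(k < n) log2 (1 + SNR * sqnorm (xr k) (xi k) w)).
Proof.
apply: measurable_funM => //; apply: measurable_sum => k.
apply: measurableT_comp; first exact: measurable_log2.
apply: measurable_funD => //; apply: measurable_funM => //.
by apply: measurable_funD; apply: measurable_funX.
Qed.

Section harq_time.
Variables (R : realType) (SNR : R) (L M : nat).
Variables (d : measure_display) (T : measurableType d) (P : probability T R).
Variables (hr hi : nat -> 'I_L -> {mfun T >-> R}).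

Lemma measurable_Tharq Rinit :
  measurable_fun [set: T] (fun w => (Tharq SNR M hr hi Rinit w)%:R : R).
Proof.
rewrite /Tharq; elim: (index_iota 1 M.+1) => [|t s IH].
  by rewrite (_ : (fun w => _) = cst M%:R) //; apply/funext => w; rewrite big_nil.
set S := fun t w => \sum_(i < t) Cround SNR hr hi i w.
set F := fun w => (\big[minn/M]_(t <- s | Rinit < S t w) t)%:R : R.
rewrite (_ : (fun w => _) =
  fun w => if Rinit < S t w then Num.min (t%:R : R) (F w) else F w); last first.
  by apply/funext => w; rewrite big_cons; case: ifP; rewrite // -minEnat natr_min.
apply: measurable_fun_ifT => //; last exact: measurable_minr.
apply: measurable_fun_ltr => //; apply: measurable_sum => i.
exact: measurable_rate.
Qed.

Lemma Tharq_bounds Rinit w : (1 <= M)%N ->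
  (1 <= Tharq SNR M hr hi Rinit w <= M)%N.
Proof.
move=> M1; rewrite /Tharq big_nat_cond; elim/big_ind: _.
- by rewrite M1 leqnn.
- move=> x y /andP[x1 xM] /andP[y1 _].
  by rewrite leq_min x1 y1 (leq_trans (geq_minl _ _) xM).
- by move=> t /andP[/andP[t1 tM] _]; rewrite t1 -ltnS.
Qed.

Lemma Tharq_mono R1 R2 w : R1 <= R2 ->
  (Tharq SNR M hr hi R1 w <= Tharq SNR M hr hi R2 w)%N.
Proof.
move=> R12; rewrite /Tharq; elim: (index_iota 1 M.+1) => [|t s IH].
  by rewrite !big_nil.
rewrite !big_cons; case: ifP => h1; case: ifP => h2.
- by rewrite leq_min geq_minl (leq_trans (geq_minr _ _) IH).
- by rewrite (leq_trans (geq_minr _ _) IH).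
- by rewrite (le_lt_trans R12 h2) in h1.
- exact: IH.
Qed.

Definition mean_Tharq Rinit := fine 'E_P[fun w => (Tharq SNR M hr hi Rinit w)%:R].

Hypothesis M1 : (1 <= M)%N.

Lemma expectation_Tharq_bounds Rinit :
  (1%:E <= 'E_P[fun w => (Tharq SNR M hr hi Rinit w)%:R] <= M%:R%:E)%E.
Proof.
have T1 w : (1 <= Tharq SNR M hr hi Rinit w)%N by case/andP: (Tharq_bounds Rinit w M1).
have TM w : (Tharq SNR M hr hi Rinit w <= M)%N by case/andP: (Tharq_bounds Rinit w M1).
apply/andP; split.
  rewrite -(expectation_cst P 1); apply: expectation_le => //.
  - exact: measurable_Tharq.
  - by apply: aeW => w; rewrite ler1n T1.
rewrite -(expectation_cst P); apply: expectation_le => //.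
- exact: measurable_Tharq.
- by apply: aeW => w; rewrite ler_nat TM.
Qed.

Lemma expectation_TharqE Rinit :
  ('E_P[fun w => (Tharq SNR M hr hi Rinit w)%:R] = (mean_Tharq Rinit)%:E)%E.
Proof.
have /andP[lb ub] := expectation_Tharq_bounds Rinit.
rewrite /mean_Tharq fineK // fin_numElt.
by rewrite (lt_le_trans (ltNyr 1) lb) (le_lt_trans ub (ltry _)).
Qed.

Lemma mean_Tharq_ge1 Rinit : 1 <= mean_Tharq Rinit.
Proof.
by rewrite -lee_fin -expectation_TharqE; case/andP: (expectation_Tharq_bounds Rinit).
Qed.

Lemma mean_Tharq_mono R1 R2 : R1 <= R2 -> mean_Tharq R1 <= mean_Tharq R2.
Proof.
move=> R12; rewrite -lee_fin -!expectation_TharqE.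
apply: expectation_le => //; try exact: measurable_Tharq.
by apply: aeW => w; rewrite ler_nat Tharq_mono.
Qed.

End harq_time.

Lemma card_prod_ord (M L : nat) : #|{: 'I_M * 'I_L}| = (M * L)%N.
Proof. by rewrite card_prod !card_ord. Qed.

Definition pair_rank (M L : nat) (p : 'I_M * 'I_L) : 'I_(M * L) :=
  cast_ord (card_prod_ord M L) (enum_rank p).

Lemma pair_rank_bij (M L : nat) : bijective (@pair_rank M L).
Proof.
exists (fun k => enum_val (cast_ord (esym (card_prod_ord M L)) k)) => p /=.
  by rewrite /pair_rank cast_ordK enum_rankK.
by rewrite /pair_rank enum_valK cast_ordKV.
Qed.

Section outage_rescaling.
Variables (R : realType) (SNR : R) (L M : nat).
Let K : finType := (('I_M * 'I_L) * bool)%type.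
Local Notation Rvec_meas := (g_sigma_algebraType (@rect_sets R K)).

Definition harq_sum (f : Rvec_meas) : R :=
  \sum_(i < M) L%:R^-1 *
    \sum_(j < L) log2 (1 + SNR * (f (i, j, true) ^+ 2 + f (i, j, false) ^+ 2)).

Lemma measurable_harq_sum_le x : measurable [set f : Rvec_meas | harq_sum f <= x].
Proof.
have mS : measurable_fun [set: Rvec_meas] harq_sum.
  apply: measurable_sum => i; apply: measurable_funM => //.
  apply: measurable_sum => j; apply: measurableT_comp; first exact: measurable_log2.
  apply: measurable_funD => //; apply: measurable_funM => //.
  by apply: measurable_funD; apply: measurable_funX; exact: measurable_coord.
have := mS measurableT _ (measurable_itv `]-oo, x]).
by rewrite setTI preimage_itvNyc.
Qed.

Variables (d : measure_display) (T : measurableType d) (P : probability T R).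
Variables (hr hi : nat -> 'I_L -> {mfun T >-> R}).
Variables (d' : measure_display) (T' : measurableType d') (P' : probability T' R).
Variables (gr gi : 'I_(M * L) -> {mfun T' >-> R}).

Definition harq_gains (k : K) : {mfun T >-> R} :=
  if k.2 then hr k.1.1 k.1.2 else hi k.1.1 k.1.2.
Definition div_gains (k : K) : {mfun T' >-> R} :=
  if k.2 then gr (pair_rank k.1) else gi (pair_rank k.1).

Hypothesis iidh :
  iid_CN01 P (fun p : nat * 'I_L => hr p.1 p.2) (fun p : nat * 'I_L => hi p.1 p.2).
Hypothesis iidg : iid_CN01 P' gr gi.

Lemma harq_gains_law_eq (A : set Rvec_meas) : measurable A ->
  P (joint harq_gains @^-1` A) = P' (joint div_gains @^-1` A).
Proof.
apply: independent_joint_law_eq.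
- apply: (mutually_independent_comp
    (f := fun k : K => (nat_of_ord k.1.1, k.1.2, k.2)) iidh.1).
  by move=> [[i j] b] [[i' j'] b'] [] /val_inj -> -> ->.
- apply: (mutually_independent_comp
    (f := fun k : K => (pair_rank k.1, k.2)) iidg.1).
  by move=> [p b] [p' b'] [] /val_inj/enum_rank_inj -> ->.
move=> [[i j] b] B mB.
have [h1 h2] := iidh.2 (nat_of_ord i, j) B mB.
have [g1 g2] := iidg.2 (pair_rank (i, j)) B mB.
by case: b => /=; [rewrite [LHS]h1 [RHS]g1 | rewrite [LHS]h2 [RHS]g2].
Qed.

Hypothesis M0 : (0 < M)%N.

Lemma div_rate_leE Rt w :
  (((M * L)%:R^-1 * \sum_(k < M * L) log2 (1 + SNR * sqnorm (gr k) (gi k) w)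
    <= Rt) = (harq_sum (joint div_gains w) <= M%:R * Rt)).
Proof.
have -> : harq_sum (joint div_gains w) =
    L%:R^-1 * \sum_(k < M * L) log2 (1 + SNR * sqnorm (gr k) (gi k) w).
  rewrite /harq_sum -big_distrr pair_big /=.
  rewrite [in RHS](reindex (@pair_rank M L)) /=; last exact: onW_bij (pair_rank_bij M L).
  by congr (_ * _); apply: eq_bigr => -[i j] _.
by rewrite natrM invfM -mulrA ler_pdivrMl ?ltr0n.
Qed.

Lemma eps_harq_scale Rt : eps_harq P SNR M hr hi (M%:R * Rt) = eps_div P' SNR gr gi Rt.
Proof.
rewrite /eps_div; under eq_set do rewrite div_rate_leE.
(* The HARQ outage event is, by conversion, the preimage of the same set
   under [joint harq_gains]. *)
by rewrite -[in RHS](harq_gains_law_eq (measurable_harq_sum_le _)).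
Qed.

Lemma eps_div_le1 Rt : eps_div P' SNR gr gi Rt <= 1.
Proof.
rewrite /eps_div; set A := [set w | _].
have mA : measurable A.
  have := measurable_rate SNR gr gi measurableT (measurable_itv `]-oo, Rt]).
  by rewrite setTI preimage_itvNyc.
have := measure_ge0 P' A; have := probability_le1 P' mA.
by case: (P' A) => [r||] //=; rewrite !lee_fin.
Qed.

Lemma eta_harqE Rinit :
  eta_harq P SNR M hr hi Rinit =
  M%:R * goodput_div P' SNR gr gi (Rinit / M%:R) / mean_Tharq SNR M P hr hi Rinit.
Proof.
have M0r : (M%:R : R) != 0 by rewrite pnatr_eq0 -lt0n.
have scale : M%:R * (Rinit / M%:R) = Rinit by rewrite mulrC divfK.
by rewrite /eta_harq /goodput_div -eps_harq_scale scale mulrA scale.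
Qed.

End outage_rescaling.

(* Abstract form of the argument: the HARQ goodput at x is m g(x / m) / E x,
   with E = E[T] positive and nondecreasing. *)
Lemma scaled_argmax_le (R : realFieldType) (m : R) (g E : R -> R) (Rg Rs : R) :
  0 < m -> 0 < Rg -> 0 <= g Rg ->
  (forall x, 0 < x -> g x <= g Rg) ->
  (forall y, 0 < y -> (forall x, 0 < x -> g x <= g y) -> y <= Rg) ->
  (forall x, 0 < E x) -> {homo E : x y / x <= y} ->
  0 < Rs -> (forall x, 0 < x -> m * g (x / m) / E x <= m * g (Rs / m) / E Rs) ->
  Rs / m <= Rg.
Proof.
move=> m0 Rg0 gRg0 Rg_max Rg_largest E0 E_mono Rs0 Rs_max.
rewrite leNgt; apply/negP => Rg_lt.
have g_lt : g (Rs / m) < g Rg.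
  rewrite ltNge; apply/negP => g_ge; move: Rg_lt; rewrite ltNge.
  apply/negP/negPn/Rg_largest; first by rewrite divr_gt0.
  by move=> x x0; exact: le_trans (Rg_max x x0) g_ge.
have E_le : E (m * Rg) <= E Rs.
  by apply: E_mono; rewrite mulrC -ler_pdivlMr // ltW.
have mRgK : m * Rg / m = Rg by rewrite mulrC mulKf ?gt_eqF.
have := Rs_max (m * Rg) (mulr_gt0 m0 Rg0); rewrite mRgK.
apply/negP; rewrite -ltNge -!mulrA ltr_pM2l //.
apply: (lt_le_trans (y := g Rg / E Rs)); first by rewrite ltr_pM2r ?invr_gt0.
by rewrite ler_wpM2l // lef_pV2 ?posrE.
Qed.

Theorem theorem1 (R : realType) (SNR : R) (L M : nat)
  (d : measure_display) (T : measurableType d) (P : probability T R)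
  (hr hi : nat -> 'I_L -> {mfun T >-> R})
  (d' : measure_display) (T' : measurableType d') (P' : probability T' R)
  (gr gi : 'I_(M * L) -> {mfun T' >-> R})
  (RML : R) :
  0 < SNR -> (1 <= L)%N -> (1 <= M)%N ->
  iid_CN01 P (fun p : nat * 'I_L => hr p.1 p.2) (fun p : nat * 'I_L => hi p.1 p.2) ->
  iid_CN01 P' gr gi ->
  (* RML is the largest maximizer of the non-HARQ goodput over R > 0 *)
  0 < RML ->
  (forall Rt, 0 < Rt -> goodput_div P' SNR gr gi Rt <= goodput_div P' SNR gr gi RML) ->
  (forall R', 0 < R' ->
     (forall Rt, 0 < Rt -> goodput_div P' SNR gr gi Rt <= goodput_div P' SNR gr gi R') ->
     R' <= RML) ->
  forall Rstar, 0 < Rstar ->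
    (forall Rinit, 0 < Rinit -> eta_harq P SNR M hr hi Rinit <= eta_harq P SNR M hr hi Rstar) ->
    Rstar / M%:R <= RML.
Proof.
move=> _ _ M1 iidh iidg RML0 RML_max RML_largest Rstar Rstar0 Rstar_max.
apply: (scaled_argmax_le (g := goodput_div P' SNR gr gi)
  (E := mean_Tharq SNR M P hr hi)) => //.
- by rewrite ltr0n.
- by rewrite /goodput_div mulr_ge0 ?subr_ge0 ?eps_div_le1 // ltW.
- by move=> x; apply: lt_le_trans (mean_Tharq_ge1 SNR P hr hi M1 x).
- by move=> x y; exact: mean_Tharq_mono.
- by move=> x x0; rewrite -!(eta_harqE SNR iidh iidg M1); exact: Rstar_max.
Qed.
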